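(* Let $\mathcal P_1,\dots,\mathcal P_n$ be nonempty sets of probability measures on $(\Omega,\mathcal F)$, $\Lambda_i\in\mathcal H_I$, and suppose $\overline{\mathbb Q}_i=\sup_{\mathbb Q\in\mathcal P_i}\mathbb Q$ (setwise supremum) are continuous capacities. Then for every $X\in\mathcal X$, $$\mathop{\square}_{i=1}^n\sup_{\mathbb Q\in\mathcal P_i}\Lambda_i\mathrm{VaR}^{\mathbb Q}(X)=\inf\{x\in\mathbb R:\{X>x\}\in\mathcal A^{\mathbf\Lambda,(\overline{\mathbb Q}_1,\dots,\overline{\mathbb Q}_n)}_x\},$$ and this functional is of the form $\Lambda\mathrm{VaR}^w$ for some $\Lambda\in\mathcal H_I^*$ and capacity $w$. If the infimum on the right is attained at $x^*$, an optimal allocation is $X_i=(X-x^* )\mathds 1_{A_i^*}+y_i^*$ with $\sum_iy_i^*=x^*$, $(A_i^* )\in\Pi_n(\Omega)$ and $\overline{\mathbb Q}_i(\{X>x^*\}\cap A_i^* )\le\Lambda_i(y_i^* )$.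
   Context: $\mathcal X$: set of real-valued random variables containing constants and closed under sums, differences and multiplication by indicators. Capacity: monotone $w:\mathcal F\to[0,1]$ with $w(\emptyset)=0$, $w(\Omega)=1$; continuous if $w(A_k)\to0$ whenever $A_k\downarrow\emptyset$. $\Lambda\mathrm{VaR}^w(X)=\inf\{x\in\mathbb R:w(X>x)\le\Lambda(x)\}$. $\mathcal H_I$: increasing functions $\mathbb R\to(0,1)$; $\mathcal H_I^*$: increasing functions $\mathbb R\to(0,1]$. $\mathcal A^{\mathbf\Lambda,\mathbf w}_x=\{\bigcup_iA_i: w_i(A_i)\le\Lambda_i(y_i)\ \forall i\text{ for some }(y_i)\text{ with }\sum_iy_i=x\}$. Inf-convolution $\mathop{\square}_i\rho_i(X)=\inf\{\sum_i\rho_i(X_i):X_i\in\mathcal X,\sum_iX_i=X\}$. $\Pi_n(\Omega)$: measurable partitions of $\Omega$ into $n$ sets. *)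

From HB Require Import structures.
From mathcomp Require Import all_boot all_order all_algebra.
From mathcomp Require Import all_classical all_reals all_analysis.
Set Implicit Arguments. Unset Strict Implicit. Unset Printing Implicit Defensive.
Import Order.TTheory GRing.Theory Num.Theory.
Local Open Scope classical_set_scope.
Local Open Scope ring_scope.

Section Defs.
Context {d : measure_display} {T : measurableType d} {R : realType}.

Definition admissible_space (XX : set (T -> R)) : Prop :=
  (forall X, XX X -> measurable_fun setT X) /\
  (forall c : R, XX (fun _ => c)) /\
  (forall X Y, XX X -> XX Y -> XX (fun w => X w + Y w)) /\
  (forall X Y, XX X -> XX Y -> XX (fun w => X w - Y w)) /\
  (forall X A, XX X -> measurable A -> XX (fun w => X w * \1_A w)).

Definition capacity (w : set T -> \bar R) : Prop :=
  w set0 = 0%E /\ w setT = 1%E /\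
  (forall A B, measurable A -> measurable B -> A `<=` B -> (w A <= w B)%E).

Definition continuous_capacity (w : set T -> \bar R) : Prop :=
  capacity w /\
  (forall A : nat -> set T, (forall k, measurable (A k)) ->
     (forall k, A k.+1 `<=` A k) -> \bigcap_k A k = set0 ->
     (fun k => w (A k)) @ \oo --> 0%E).

Definition H_I (L : R -> R) : Prop :=
  {homo L : x y / x <= y} /\ (forall x, 0 < L x < 1).
Definition H_I_star (L : R -> R) : Prop :=
  {homo L : x y / x <= y} /\ (forall x, 0 < L x <= 1).

Definition LVaR (L : R -> R) (w : set T -> \bar R) (X : T -> R) : \bar R :=
  ereal_inf [set x%:E | x in [set x : R | (w [set t | (x < X t)%R] <= (L x)%:E)%E]].

Definition supLVaR (L : R -> R) (P : set (probability T R)) (X : T -> R) : \bar R :=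
  ereal_sup [set LVaR L (fun A => Q A) X | Q in P].

Definition Qbar (P : set (probability T R)) (A : set T) : \bar R :=
  ereal_sup [set Q A | Q in P].

Definition infconv (n : nat) (XX : set (T -> R))
    (rho : 'I_n -> (T -> R) -> \bar R) (X : T -> R) : \bar R :=
  ereal_inf [set (\sum_(i < n) rho i (Xs i))%E | Xs in
    [set Xs : 'I_n -> T -> R | (forall i, XX (Xs i)) /\
                                (forall t, \sum_(i < n) Xs i t = X t)]].

Definition Aset (n : nat) (L : 'I_n -> R -> R) (w : 'I_n -> set T -> \bar R)
    (x : R) : set (set T) :=
  [set B | exists (A : 'I_n -> set T) (y : 'I_n -> R),
     (forall i, measurable (A i)) /\
     (forall i, (w i (A i) <= (L i (y i))%:E)%E) /\
     \sum_(i < n) y i = x /\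
     B = \bigcup_(i in [set: 'I_n]) A i].

Definition partition_n (n : nat) (A : 'I_n -> set T) : Prop :=
  (forall i, measurable (A i)) /\
  (forall i j, i != j -> A i `&` A j = set0) /\
  \bigcup_(i in [set: 'I_n]) A i = setT.

End Defs.

(* For "<=", a point x of the right-hand set comes with sets A_i and levels
   y_i summing to x; disjointifying the A_i (completed by the complement of
   {X > x}) gives a partition with Qbar_i({X > x} & A_i) <= Lambda_i(y_i), and
   the allocation X_i = (X - x) 1_(A_i) + y_i satisfies {X_i > y_i} =
   {X > x} & A_i, so its i-th cost is at most y_i.  For ">=", given any
   decomposition X = sum X_i with finite costs r_i, pick z_i slightly above
   r_i: then Qbar_i(X_i > z_i) <= Lambda_i(z_i), and {X > sum z_i} is covered
   by the sets {X_i > z_i}, so sum z_i belongs to the right-hand set.  The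
   representation as a single Lambda-VaR only uses that the acceptance family
   A_x is increasing in x and closed under measurable subsets. *)

From HB Require Import structures.
From mathcomp Require Import all_boot all_order all_algebra.
From mathcomp Require Import all_classical all_reals all_analysis.
Import Order.TTheory GRing.Theory Num.Theory.
Local Open Scope classical_set_scope.
Local Open Scope ring_scope.
Set Implicit Arguments.
Unset Strict Implicit.

Section logistic.
Variable R : realType.

Definition logistic (x : R) : R := (1 + expR (- x))^-1.

Lemma logistic_gt0 x : 0 < logistic x.
Proof. by rewrite invr_gt0 addr_gt0 ?expR_gt0. Qed.

Lemma logistic_lt1 x : logistic x < 1.
Proof. by rewrite invf_lt1 ?ltrDl ?expR_gt0 // addr_gt0 ?expR_gt0. Qed.

Lemma logistic_lt : {mono logistic : x y / x < y}.
Proof.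
move=> x y; rewrite ltf_pV2 ?posrE ?addr_gt0 ?expR_gt0 //.
by rewrite ltrD2l ltr_expR ltrN2.
Qed.

Lemma logistic_le : {mono logistic : x y / x <= y}.
Proof. by apply: le_mono => x y; rewrite logistic_lt. Qed.

Definition elogistic (v : \bar R) : R :=
  match v with EFin r => logistic r | +oo%E => 1 | -oo%E => 0 end.

Lemma elogistic_le1 v : elogistic v <= 1.
Proof. by case: v => [r| |] //=; exact/ltW/logistic_lt1. Qed.

Lemma elogistic_le : {mono elogistic : v w / (v <= w)%E >-> v <= w}.
Proof.
have [lt1 gt0] := (logistic_lt1, logistic_gt0).
case=> [r| |] [s| |] //=; rewrite ?lee_fin ?logistic_le ?leey ?leNye ?lexx ?ler01
  ?ler10 ?leeNy_eq ?leye_eq //.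
- by rewrite ltW.
- by rewrite leNgt gt0.
- by rewrite leNgt lt1.
- by rewrite ltW.
Qed.

End logistic.

Section lambda_var.
Context {d : measure_display} {T : measurableType d} {R : realType}.
Implicit Types (X Y : T -> R) (L : R -> R) (P : set (probability T R)).

Lemma measurable_gt_level X x :
  measurable_fun setT X -> measurable [set t | x < X t].
Proof.
by move=> mX; rewrite -preimage_itvoy -(setTI (_ @^-1` _)); exact: mX.
Qed.

Lemma probability_setT_neq0 (Q : probability T R) : setT != set0 :> set T.
Proof.
apply/eqP => T0; have := probability_setT Q; rewrite T0 measure0 => /eqP.
by rewrite eq_sym eqe oner_eq0.
Qed.

Lemma LVaR_le L (w : set T -> \bar R) Y (y : R) :
  (w [set t | (y < Y t)%R] <= (L y)%:E)%E -> (LVaR L w Y <= y%:E)%E.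
Proof. by move=> h; apply: ereal_inf_lbound; exists y. Qed.

(* Q(Y > -k) tends to 1 > L 0, so no x <= -k satisfies Q(Y > x) <= L x <= L 0. *)
Lemma LVaR_bounded_below L (Q : probability T R) Y :
  H_I L -> measurable_fun setT Y ->
  exists x0 : R, (x0%:E <= LVaR L (fun A => Q A) Y)%E.
Proof.
move=> [L_homo L_range] mY.
pose F k := [set t | - (k%:R) < Y t].
have mF k : measurable (F k) by exact: measurable_gt_level.
have F_cover : \bigcup_k F k = setT.
  apply/seteqP; split => // t _; exists (Num.bound `|Y t|) => //.
  rewrite /F /= ltrNl; apply: le_lt_trans (archi_boundP (normr_ge0 _)).
  by rewrite -normrN ler_norm.
have F_homo : {homo F : m k / (m <= k)%N >-> (m <= k)%O}.
  move=> m k mk; apply/subsetPset => t /=; apply: le_lt_trans.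
  by rewrite lerN2 ler_nat.
have QF1 : (Q \o F) k @[k --> \oo] --> (1%E : \bar R).
  rewrite -(probability_setT Q) -F_cover.
  by apply: nondecreasing_cvg_mu => //; rewrite F_cover.
have [k Fk_big] : exists k, ((L 0)%:E < Q (F k))%E.
  apply: contrapT => Fk_small.
  suff : (1 <= (L 0)%:E)%E.
    by rewrite lee_fin leNgt; case/andP: (L_range 0) => _ ->.
  apply: (cvge_to_le QF1); apply: filterE => k /=.
  by rewrite leNgt; apply/negP => h; apply: Fk_small; exists k.
exists (- k%:R); apply: le_ereal_inf_tmp => _ [x Sx <-]; rewrite lee_fin.
rewrite leNgt; apply/negP => xk; move: Fk_big; apply/negP; rewrite -leNgt.
apply: le_trans (le_trans Sx _); last first.
  by rewrite lee_fin; apply: L_homo; rewrite (le_trans (ltW xk)) ?oppr_le0.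
apply: le_measure; rewrite ?inE; try exact: measurable_gt_level.
by move=> t /=; apply: lt_trans.
Qed.

Lemma supLVaR_gt_ninfty L P Y :
  P !=set0 -> H_I L -> measurable_fun setT Y -> supLVaR L P Y != -oo%E.
Proof.
move=> [Q PQ] HL mY; have [x0 x0_le] := LVaR_bounded_below Q HL mY.
rewrite -ltNye; apply: lt_le_trans (ltNyr x0) _; apply: le_trans x0_le _.
by apply: ereal_sup_ubound; exists Q.
Qed.

Lemma supLVaR_le L P Y (y : R) :
  (Qbar P [set t | (y < Y t)%R] <= (L y)%:E)%E -> (supLVaR L P Y <= y%:E)%E.
Proof.
move=> QY; apply: ge_ereal_sup => _ [Q PQ <-]; apply: LVaR_le.
by apply: le_trans QY; apply: ereal_sup_ubound; exists Q.
Qed.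

Lemma supLVaR_lt_Qbar_le L P Y (z : R) :
  {homo L : x y / x <= y} -> measurable_fun setT Y ->
  (supLVaR L P Y < z%:E)%E -> (Qbar P [set t | (z < Y t)%R] <= (L z)%:E)%E.
Proof.
move=> L_homo mY Yz; apply: ge_ereal_sup => _ [Q PQ <-].
have : (LVaR L (fun A => Q A) Y < z%:E)%E.
  by apply: le_lt_trans Yz; apply: ereal_sup_ubound; exists Q.
move=> /ereal_inf_lt [_ [x Sx <-]]; rewrite lte_fin => xz.
apply: le_trans (le_trans Sx _); last by rewrite lee_fin L_homo // ltW.
apply: le_measure; rewrite ?inE; try exact: measurable_gt_level.
by move=> t /=; apply: lt_trans.
Qed.

End lambda_var.

Section acceptance_family.
Context {d : measure_display} {T : measurableType d} {R : realType}.
Variables (n : nat) (L : 'I_n -> R -> R) (w : 'I_n -> set T -> \bar R).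
Hypotheses (n_gt0 : (0 < n)%N) (HL : forall i, H_I (L i))
  (cw : forall i, capacity (w i)).

Lemma sum_split_evenly (c : R) : \sum_(i < n) c / n%:R = c.
Proof.
by rewrite sumr_const card_ord -[_ *+ n]mulr_natr divfK // pnatr_eq0 -lt0n.
Qed.

Lemma partition_of_cover (C : 'I_n -> set T) :
  (forall i, measurable (C i)) -> \bigcup_(i in [set: 'I_n]) C i = setT ->
  partition_n (fun i => C i `\` \bigcup_(j in [set j : 'I_n | (j < i)%N]) C j).
Proof.
move=> mC C_cover; split.
  move=> i; apply: measurableD => //.
  by apply: fin_bigcup_measurable => //; exact: finite_finset.
split.
  move=> i j ij; apply/seteqP; split => // t [[Cit Ci'] [Cjt Cj']].
  by case: (ltngtP i j) => [lt_ij|lt_ji|/val_inj eq_ij];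
    [apply: Cj'; exists i | apply: Ci'; exists j | rewrite eq_ij eqxx in ij].
apply/seteqP; split => // t _.
have [j0 _ Cj0t] : (\bigcup_(i in [set: 'I_n]) C i) t by rewrite C_cover.
case: (@arg_minnP _ j0 (fun i => `[< C i t >]) val) => [|i /asboolP Cit i_min].
  exact/asboolP.
exists i => //; split => // -[j /= lt_ji Cjt].
by move: (i_min j (asboolT Cjt)); rewrite leqNgt lt_ji.
Qed.

Lemma sum_indic_partition (As : 'I_n -> set T) (t : T) :
  partition_n As -> \sum_(i < n) \1_(As i) t = 1 :> R.
Proof.
move=> [_ [As_disj As_cover]].
have [j _ Ajt] : (\bigcup_(i in [set: 'I_n]) As i) t by rewrite As_cover.
rewrite (bigD1 j) //= big1 ?addr0; first by rewrite indicE mem_set.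
move=> i ij; rewrite indicE memNset //= => Ait.
by have : (As i `&` As j) t by []; rewrite As_disj.
Qed.

Lemma Aset_le (x x' : R) B : x <= x' -> Aset L w x B -> Aset L w x' B.
Proof.
move=> le_xx' [A [y [mA [wA [sum_y ->]]]]].
exists A, (fun i => y i + (x' - x) / n%:R); split => //; split.
  move=> i; apply: le_trans (wA i) _; rewrite lee_fin.
  by case: (HL i) => L_homo _; apply: L_homo; rewrite lerDl divr_ge0 ?subr_ge0.
by rewrite big_split /= sum_y sum_split_evenly addrC subrK.
Qed.

Lemma Aset_subset (x : R) B B' :
  measurable B' -> B' `<=` B -> Aset L w x B -> Aset L w x B'.
Proof.
move=> mB' B'B [A [y [mA [wA [sum_y eB]]]]].
exists (fun i => A i `&` B'), y; split; first by move=> i; exact: measurableI.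
split.
  move=> i; apply: le_trans (wA i); case: (cw i) => _ [_ w_homo].
  by apply: w_homo => //; exact: measurableI.
by split => //; rewrite -setI_bigcupl -eB setIidr.
Qed.

Lemma Aset0 (x : R) : Aset L w x set0.
Proof.
exists (fun _ => set0), (fun _ => x / n%:R); split => //; split.
  move=> i; case: (cw i) => -> _; rewrite lee_fin.
  by case: (HL i) => _ /(_ (x / n%:R)) /andP[/ltW].
by rewrite sum_split_evenly bigcup0.
Qed.

(* Disjointify the cover (A_0 u ~B, A_1, ..., A_(n-1)) of the whole space. *)
Lemma Aset_partition (x : R) B : Aset L w x B ->
  exists (ys : 'I_n -> R) (As : 'I_n -> set T),
    \sum_(i < n) ys i = x /\ partition_n As /\
    forall i, (w i (B `&` As i) <= (L i (ys i))%:E)%E.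
Proof.
move=> [A [y [mA [wA [sum_y eB]]]]].
have mB : measurable B.
  by rewrite eB; apply: fin_bigcup_measurable => //; exact: finite_finset.
pose C i := if val i == 0%N then A i `|` ~` B else A i.
have mC i : measurable (C i).
  by rewrite /C; case: ifP => _ //; exact: measurableU (measurableC _).
have C_cover : \bigcup_(i in [set: 'I_n]) C i = setT.
  apply/seteqP; split => // t _; have [Bt|nBt] := pselect (B t).
    move: Bt; rewrite {1}eB => -[i _ Ait].
    by exists i => //; rewrite /C; case: ifP => //; left.
  by exists (Ordinal n_gt0) => //; rewrite /C eqxx; right.
pose D i := C i `\` \bigcup_(j in [set j : 'I_n | (j < i)%N]) C j.
have D_part : partition_n D by exact: partition_of_cover.
exists y, D; split => //; split => // i.
apply: le_trans (wA i); case: (cw i) => _ [_ w_homo].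
apply: w_homo => //; first by case: D_part => mD _; exact: measurableI.
by move=> t [Bt [+ _]]; rewrite /C; case: ifP => // _ [].
Qed.

End acceptance_family.

Definition allocation {T : Type} {R : pzRingType} (n : nat) (X : T -> R) (x : R)
    (ys : 'I_n -> R) (As : 'I_n -> set T) (i : 'I_n) (t : T) : R :=
  (X t - x) * \1_(As i) t + ys i.

Section inf_convolution.
Context {d : measure_display} {T : measurableType d} {R : realType}.
Variables (XX : set (T -> R)) (n : nat) (P : 'I_n -> set (probability T R))
  (L : 'I_n -> R -> R).
Hypotheses (adm : admissible_space XX) (n_gt0 : (0 < n)%N)
  (P_neq0 : forall i, P i !=set0) (HL : forall i, H_I (L i))
  (cQ : forall i, capacity (Qbar (P i))).
Implicit Types (X : T -> R) (x : R) (ys : 'I_n -> R) (As : 'I_n -> set T).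

Let rho i := supLVaR (L i) (P i).
Let Q i := Qbar (P i).
Let RHS (X : T -> R) := ereal_inf [set x%:E | x in
  [set x : R | Aset L Q x [set t | (x < X t)%R]]].

Lemma allocation_admissible X x ys As i :
  XX X -> measurable (As i) -> XX (allocation X x ys As i).
Proof.
case: adm => _ [XX_cst [XX_add [XX_sub XX_indic]]] XX_X mA.
by apply: XX_add (XX_cst _); apply: XX_indic mA; apply: XX_sub (XX_cst _).
Qed.

Lemma sum_allocation X x ys As t :
  \sum_(i < n) ys i = x -> partition_n As ->
  \sum_(i < n) allocation X x ys As i t = X t.
Proof.
move=> sum_ys As_part; rewrite big_split /= sum_ys -mulr_sumr.
by rewrite sum_indic_partition // mulr1 subrK.
Qed.

Lemma allocation_gt_level X x ys As i :
  [set t | ys i < allocation X x ys As i t] = [set t | (x < X t)%R] `&` As i.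
Proof.
apply/seteqP; split => t /=; rewrite /allocation indicE.
  case: (boolP (t \in As i)) => [/set_mem Ait|_]; last first.
    by rewrite mulr0 add0r ltxx.
  by rewrite mulr1 ltrDr subr_gt0.
by move=> [xX Ait]; rewrite mem_set // mulr1 ltrDr subr_gt0.
Qed.

Lemma sum_rho_allocation_le X x ys As :
  \sum_(i < n) ys i = x ->
  (forall i, (Q i ([set t | (x < X t)%R] `&` As i) <= (L i (ys i))%:E)%E) ->
  (\sum_(i < n) rho i (allocation X x ys As i) <= x%:E)%E.
Proof.
move=> sum_ys QA; rewrite -[in leRHS]sum_ys -sumEFin; apply: lee_sum => i _.
by apply: supLVaR_le; rewrite allocation_gt_level; exact: QA.
Qed.

Lemma infconv_le_RHS X : XX X -> (infconv XX rho X <= RHS X)%E.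
Proof.
move=> XX_X; apply: le_ereal_inf_tmp => _ [x AX <-].
have [ys [As [sum_ys [As_part QA]]]] := Aset_partition n_gt0 cQ AX.
apply: le_trans (sum_rho_allocation_le sum_ys QA).
apply: ereal_inf_lbound; exists (allocation X x ys As) => //; split.
  by move=> i; apply: allocation_admissible => //; case: As_part.
by move=> t; exact: sum_allocation.
Qed.

(* X = sum Xs exceeds sum z only where some Xs i exceeds z i. *)
Lemma Aset_of_decomposition X (Xs : 'I_n -> T -> R) (z : 'I_n -> R) :
  XX X -> (forall i, XX (Xs i)) -> (forall t, \sum_(i < n) Xs i t = X t) ->
  (forall i, (rho i (Xs i) < (z i)%:E)%E) ->
  Aset L Q (\sum_(i < n) z i) [set t | (\sum_(i < n) z i < X t)%R].
Proof.
case: adm => mXX _ XX_X XXs sum_Xs rho_lt.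
exists (fun i => [set t | z i < Xs i t] `&` [set t | \sum_(j < n) z j < X t]), z.
have mXs i : measurable [set t | z i < Xs i t].
  by apply: measurable_gt_level; apply: mXX.
have mX : measurable [set t | \sum_(j < n) z j < X t].
  by apply: measurable_gt_level; apply: mXX.
split; first by move=> i; exact: measurableI.
split.
  move=> i; apply: le_trans (supLVaR_lt_Qbar_le _ (mXX _ (XXs i)) (rho_lt i)).
    case: (cQ i) => _ [_ Q_homo].
    by apply: Q_homo; [exact: measurableI | exact: mXs | exact: subIsetl].
  by case: (HL i).
split => //; apply/seteqP; split => t /=; last by case=> i _ [].
move=> zX; have [i zXi] : exists i, z i < Xs i t.
  apply: contrapT => Xs_le; move: zX; rewrite -sum_Xs ltNge => /negP; apply.
  apply: ler_sum => i _; rewrite leNgt; apply/negP => lt_zXs.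
  by apply: Xs_le; exists i.
by exists i.
Qed.

Lemma RHS_le_infconv X : XX X -> (RHS X <= infconv XX rho X)%E.
Proof.
move=> XX_X; case: adm => mXX _.
apply: le_ereal_inf_tmp => _ [Xs [XXs sum_Xs] <-].
pose r i := rho i (Xs i).
have r_ninfty i : r i != -oo%E.
  by apply: supLVaR_gt_ninfty => //; apply: mXX.
have [r_infty|r_fin] := boolP [exists i, r i == +oo%E].
  have /eqP -> : (\sum_(i < n) r i == +oo)%E by rewrite esum_eqy.
  exact: leey.
have r_fin_num i : r i \is a fin_num.
  rewrite fin_numE r_ninfty /=; apply: contra r_fin => /eqP r_i.
  by apply/existsP; exists i; rewrite r_i.
apply/lee_addgt0Pr => e e_gt0.
pose z i := fine (r i) + e / n%:R.
have -> : (\sum_(i < n) r i + e%:E = (\sum_(i < n) z i)%:E)%E.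
  rewrite big_split /= sum_split_evenly // EFinD -sumEFin.
  by congr (_ + _)%E; apply: eq_bigr => i _; rewrite fineK.
apply: ereal_inf_lbound; exists (\sum_(i < n) z i) => //.
apply: Aset_of_decomposition XX_X XXs sum_Xs _ => i.
by rewrite -/(r i) -(fineK (r_fin_num i)) lte_fin ltrDl divr_gt0 ?ltr0n.
Qed.

Lemma infconv_eq_RHS X : XX X -> infconv XX rho X = RHS X.
Proof.
by move=> XX_X; apply/eqP; rewrite eq_le infconv_le_RHS // RHS_le_infconv.
Qed.

Lemma allocation_optimal X x ys As : XX X -> RHS X = x%:E ->
  \sum_(i < n) ys i = x -> partition_n As ->
  (forall i, (Q i ([set t | (x < X t)%R] `&` As i) <= (L i (ys i))%:E)%E) ->
  (\sum_(i < n) rho i (allocation X x ys As i))%E = infconv XX rho X.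
Proof.
move=> XX_X RHS_x sum_ys As_part QA; apply/eqP; rewrite eq_le.
rewrite infconv_eq_RHS // RHS_x sum_rho_allocation_le //=.
rewrite -RHS_x -infconv_eq_RHS //; apply: ereal_inf_lbound.
exists (allocation X x ys As) => //.
split; last by move=> t; exact: sum_allocation.
by move=> i; apply: allocation_admissible => //; case: As_part.
Qed.

End inf_convolution.

Lemma ereal_inf_le_of_strict_upper {R : realType} (S1 S2 : set R) :
  (forall x x', S1 x -> x < x' -> S2 x') ->
  (ereal_inf [set x%:E | x in S2] <= ereal_inf [set x%:E | x in S1])%E.
Proof.
move=> S12; apply: le_ereal_inf_tmp => _ [x S1x <-].
apply/lee_addgt0Pr => e e_gt0; apply: ereal_inf_lbound.
by exists (x + e); [apply: (S12 x) => //; rewrite ltrDl | rewrite EFinD].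
Qed.

(* Any functional X |-> inf {x | G x {X > x}}, with G increasing in x and
   hereditary in the set, is a Lambda-VaR: the capacity of B encodes (through
   an order embedding of \bar R into [0, 1]) the threshold inf {x | G x B}, so
   that w B <= Lambda x amounts to threshold B <= x up to the boundary case,
   which does not move the infimum.  Since w must take the value 1 on the whole
   space, Lambda jumps to 1 beyond the threshold of the whole space. *)
Section Lambda_VaR_representation.
Context {d : measure_display} {T : measurableType d} {R : realType}.
Variable G : R -> set T -> Prop.
Hypotheses (T_neq0 : setT != set0 :> set T)
  (G_le : forall z x B, z <= x -> G z B -> G x B)
  (G_subset : forall x B B', measurable B' -> B' `<=` B -> G x B -> G x B')
  (G0 : forall x, G x set0).

Definition threshold (B : set T) : \bar R := ereal_inf [set x%:E | x in G ^~ B].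

Definition repr_Lambda (x : R) : R :=
  if (threshold setT < x%:E)%E then 1 else logistic x.

Definition repr_capacity (B : set T) : \bar R :=
  if `[< B = setT >] then 1%E else (elogistic (threshold B))%:E.

Lemma threshold_le A B :
  measurable A -> A `<=` B -> (threshold A <= threshold B)%E.
Proof.
move=> mA AB; apply: ereal_inf_le_tmp => _ [x GxB <-]; exists x => //.
exact: G_subset GxB.
Qed.

Lemma threshold0 : threshold set0 = -oo%E.
Proof.
rewrite /threshold -[RHS](@ereal_inf_real R); congr ereal_inf.
by apply/seteqP; split => _ [x _ <-]; exists x => //; exact: G0.
Qed.

Lemma repr_Lambda_H_I_star : H_I_star repr_Lambda.
Proof.
split=> [x y le_xy|x]; rewrite /repr_Lambda; last first.
  by case: ifP => _; rewrite ?ltr01 ?lexx // logistic_gt0 ltW // logistic_lt1.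
case: ifP => [thr_x|_]; first by rewrite (lt_le_trans thr_x) // lee_fin.
by case: ifP => _; [exact/ltW/logistic_lt1 | rewrite logistic_le].
Qed.

Lemma repr_capacity_capacity : capacity repr_capacity.
Proof.
rewrite /repr_capacity; split.
  case: asboolP => [T0|_]; first by move: T_neq0; rewrite -T0 eqxx.
  by rewrite threshold0.
split; first by case: asboolP.
move=> A B mA mB AB.
case: asboolP => [A_T|A_nT]; case: asboolP => [B_T|B_nT] //.
- by exfalso; apply: B_nT; apply/seteqP; split => // t _; apply: AB; rewrite A_T.
- by rewrite lee_fin elogistic_le1.
- by rewrite lee_fin elogistic_le // threshold_le.
Qed.

Section level_sets.
Variable X : T -> R.
Hypothesis mX : measurable_fun setT X.

Lemma repr_accepts_level (x x' : R) : G x [set t | (x < X t)%R] -> x < x' ->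
  (repr_capacity [set t | (x' < X t)%R] <= (repr_Lambda x')%:E)%E.
Proof.
move=> Gx lt_xx'; rewrite /repr_Lambda /repr_capacity.
have thr_x : (threshold [set t | (x < X t)%R] <= x%:E)%E.
  by apply: ereal_inf_lbound; exists x.
case: asboolP => [X_T|_].
  suff -> : (threshold setT < x'%:E)%E by [].
  rewrite -X_T; apply: le_lt_trans (threshold_le _ _) (le_lt_trans thr_x _).
  - exact: measurable_gt_level.
  - by move=> t /=; apply: lt_trans.
  - by rewrite lte_fin.
case: ifP => _; first by rewrite lee_fin elogistic_le1.
rewrite lee_fin -[logistic x']/(elogistic x'%:E) elogistic_le //.
apply: le_trans (threshold_le _ _) (le_trans thr_x _).
- exact: measurable_gt_level.
- by move=> t /=; apply: lt_trans.
- by rewrite lee_fin ltW.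
Qed.

Lemma repr_level_accepted (x x' : R) :
  (repr_capacity [set t | (x < X t)%R] <= (repr_Lambda x)%:E)%E -> x < x' ->
  G x' [set t | (x' < X t)%R].
Proof.
have G_level z B : (threshold B < z%:E)%E ->
    [set t | (z < X t)%R] `<=` B -> G z [set t | (z < X t)%R].
  move=> /ereal_inf_lt [_ [y GyB <-]]; rewrite lte_fin => lt_yz zX.
  by apply: G_subset zX (G_le (ltW lt_yz) GyB); exact: measurable_gt_level.
move=> acc lt_xx'; have xX : [set t | (x' < X t)%R] `<=` [set t | (x < X t)%R].
  by move=> t /=; apply: lt_trans.
have G_of_thr_T : (threshold setT < x%:E)%E -> G x' [set t | (x' < X t)%R].
  move=> thr_T; apply: (G_level _ setT) => //.
  by apply: lt_trans thr_T _; rewrite lte_fin.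
move: acc; rewrite /repr_Lambda /repr_capacity.
case: asboolP => _; case: ifP => [thr_T _|_]; try exact: G_of_thr_T.
  by rewrite lee_fin leNgt logistic_lt1.
rewrite lee_fin -[logistic x]/(elogistic x%:E) elogistic_le => thr_x.
by apply: G_level xX; apply: le_lt_trans thr_x _; rewrite lte_fin.
Qed.

End level_sets.

Lemma inf_level_eq_LVaR X : measurable_fun setT X ->
  ereal_inf [set x%:E | x in [set x | G x [set t | (x < X t)%R]]] =
  LVaR repr_Lambda repr_capacity X.
Proof.
move=> mX; apply/eqP; rewrite eq_le; apply/andP; split.
  by apply: ereal_inf_le_of_strict_upper => x x'; exact: repr_level_accepted.
by apply: ereal_inf_le_of_strict_upper => x x'; exact: repr_accepts_level.
Qed.

End Lambda_VaR_representation.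

Theorem mainTheorem12 (d : measure_display) (T : measurableType d) (R : realType)
  (XX : set (T -> R)) (n : nat) (P : 'I_n -> set (probability T R))
  (L : 'I_n -> R -> R) :
  admissible_space XX ->
  (0 < n)%N ->
  (forall i, P i !=set0) ->
  (forall i, H_I (L i)) ->
  (forall i, continuous_capacity (Qbar (P i))) ->
  let rho := fun i => supLVaR (L i) (P i) in
  let RHS := fun X : T -> R =>
    ereal_inf [set x%:E | x in [set x : R |
      Aset L (fun i => Qbar (P i)) x [set t | (x < X t)%R]]] in
  (forall X, XX X -> infconv XX rho X = RHS X) /\
  (exists (L0 : R -> R) (w : set T -> \bar R),
     H_I_star L0 /\ capacity w /\
     forall X, XX X -> infconv XX rho X = LVaR L0 w X) /\
  (forall X (xs : R), XX X ->
     Aset L (fun i => Qbar (P i)) xs [set t | (xs < X t)%R] ->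
     RHS X = xs%:E ->
     (exists (ys : 'I_n -> R) (As : 'I_n -> set T),
        \sum_(i < n) ys i = xs /\ partition_n As /\
        forall i, (Qbar (P i) ([set t | (xs < X t)%R] `&` As i)
                    <= (L i (ys i))%:E)%E) /\
     (forall (ys : 'I_n -> R) (As : 'I_n -> set T),
        \sum_(i < n) ys i = xs -> partition_n As ->
        (forall i, (Qbar (P i) ([set t | (xs < X t)%R] `&` As i)
                     <= (L i (ys i))%:E)%E) ->
        let Xs := fun i t => (X t - xs) * \1_(As i) t + ys i in
        (forall i, XX (Xs i)) /\
        (forall t, \sum_(i < n) Xs i t = X t) /\
        (\sum_(i < n) rho i (Xs i))%E = infconv XX rho X)).
Proof.
move=> adm n_gt0 P_neq0 HL cQ rho RHS.
have cw i : capacity (Qbar (P i)) by case: (cQ i).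
have eq_RHS := infconv_eq_RHS adm n_gt0 P_neq0 HL cw.
split=> //; split.
  pose A := Aset L (fun i => Qbar (P i)).
  have A_le z x B : z <= x -> A z B -> A x B by exact: Aset_le.
  have A_subset x B B' : measurable B' -> B' `<=` B -> A x B -> A x B'.
    exact: Aset_subset.
  have A0 x : A x set0 by exact: Aset0.
  have [Q _] := P_neq0 (Ordinal n_gt0).
  have T_neq0 := probability_setT_neq0 Q.
  exists (repr_Lambda A), (repr_capacity A).
  split; first exact: repr_Lambda_H_I_star.
  split; first exact: repr_capacity_capacity.
  move=> X XX_X; rewrite eq_RHS // -inf_level_eq_LVaR //.
  by case: adm => mXX _; exact: mXX.
move=> X xs XX_X A_xs RHS_xs; split.
  by have [ys [As ys_As]] := Aset_partition n_gt0 cw A_xs; exists ys, As.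
move=> ys As sum_ys As_part QA Xs.
have -> : Xs = allocation X xs ys As by [].
split.
  by move=> i; apply: allocation_admissible => //; case: As_part.
split; first by move=> t; exact: sum_allocation.
exact: allocation_optimal.
Qed.
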